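(* Let $G$ be a finite simple undirected graph with $g(G)>\chi(G)$, where $g(G)$ is the girth of $G$ and $\chi(G)$ is the chromatic number of $G$, and let $\beta$ be any proper colouring of $G$. Then $G$ contains an induced path on $\chi(G)$ vertices whose vertices receive pairwise distinct colours under $\beta$.
   Context: A proper colouring $\beta$ of $G$ is a map from $V(G)$ to a set of colours such that $\beta(u)\neq\beta(v)$ for every edge $uv\in E(G)$; it need not use only $\chi(G)$ colours. The girth $g(G)$ is the length of a shortest cycle in $G$ (taken to be $\infty$ if $G$ has no cycle). A path is induced if no two non-consecutive vertices of the path are adjacent in $G$. *)

From mathcomp Require Import all_boot.
Set Implicit Arguments. Unset Strict Implicit. Unset Printing Implicit Defensive.

Section Graphs.
Variable T : finType.
Variable e : rel T.

Definition simple_graph : Prop := symmetric e /\ irreflexive e.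

Definition proper_colouring (C : Type) (beta : T -> C) : Prop :=
  forall x y, e x y -> beta x <> beta y.

Definition k_colourable (k : nat) : Prop :=
  exists f : T -> 'I_k, proper_colouring f.

Definition chromatic_number (k : nat) : Prop :=
  k_colourable k /\ forall j, k_colourable j -> k <= j.

Definition is_cycle (s : seq T) : Prop :=
  2 < size s /\ uniq s /\ cycle e s.

(* g(G) > k, where g(G) is the minimum length of a cycle (infinity if none) *)
Definition girth_gt (k : nat) : Prop :=
  forall s, is_cycle s -> k < size s.

Definition induced_path (p : seq T) : Prop :=
  uniq p /\ sorted e p /\
  forall (x0 : T) (i j : nat), i.+1 < j -> j < size p ->
    ~~ e (nth x0 p i) (nth x0 p j).
End Graphs.

(** Order the colours of [beta] linearly and orient every edge towards the
    larger colour.  Colouring each vertex by the number of vertices of a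
    longest directed path ending at it is proper, so some directed path has at
    least [chi] vertices; its colours increase along it, hence are pairwise
    distinct.  Any [chi] consecutive vertices of it form an induced path,
    because a chord would close a cycle on at most [chi] vertices. *)
From mathcomp Require Import all_boot.
From mathcomp Require Import zify.

Set Implicit Arguments. Unset Strict Implicit. Unset Printing Implicit Defensive.

Section Height.
Variables (T : finType) (d : rel T) (r : T -> nat).
Hypothesis d_rank : forall u v, d u v -> r u < r v.

Fixpoint height_upto (m : nat) (v : T) : nat :=
  if m is k.+1 then (\max_(u | d u v) height_upto k u).+1 else 1.

(* A [d]-path ending at [v] has at most [r v] edges, so fuel [r v] suffices. *)
Definition height (v : T) : nat := height_upto (r v) v.

Lemma height_upto_gt0 m v : 0 < height_upto m v.
Proof. by case: m. Qed.

Lemma height_upto_stable m1 m2 v :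
  r v <= m1 -> r v <= m2 -> height_upto m1 v = height_upto m2 v.
Proof.
elim: m1 m2 v => [|k IH] [|l] v /= le1 le2 //;
  try by rewrite big_pred0 // => u; apply/negP => /d_rank; lia.
congr S; apply: eq_bigr => u /d_rank duv; apply: IH; lia.
Qed.

Lemma height_gt0 v : 0 < height v.
Proof. exact: height_upto_gt0. Qed.

Lemma height_lt u v : d u v -> height u < height v.
Proof.
move=> duv; have := d_rank duv; rewrite /height.
case: (r v) => [|k] //= ltk.
rewrite ltnS (@height_upto_stable (r u) k) //.
exact: leq_bigmax_cond.
Qed.

Lemma path_of_height_upto m v :
  exists p, [/\ sorted d p, last v p = v & size p = height_upto m v].
Proof.
elim: m v => [|k IH] v /=; first by exists [:: v].
have [no_pred|has_pred] := posnP #|[pred u | d u v]|.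
  exists [:: v]; split => //=.
  by rewrite big_pred0 // => u; have := card0_eq no_pred u.
have [u duv ->] := eq_bigmax_cond (height_upto k) has_pred.
have [[|x s] [/= path_s last_s size_p]] := IH u.
  by have := height_upto_gt0 k u; rewrite -size_p.
exists (rcons (x :: s) v); split.
- by rewrite /= rcons_path path_s last_s.
- exact: last_rcons.
- by rewrite size_rcons -size_p.
Qed.

Lemma path_of_height v : exists2 p, sorted d p & size p = height v.
Proof. by have [p [sorted_p _ size_p]] := path_of_height_upto (r v) v; exists p. Qed.

Section Colouring.
Variable e : rel T.
Hypothesis d_orients_e : forall x y, e x y -> d x y || d y x.

Lemma height_proper : proper_colouring e height.
Proof.
move=> x y /d_orients_e /orP[] /height_lt lt_h eq_h; by rewrite eq_h ltnn in lt_h.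
Qed.

Lemma colourable_of_height_bound k :
  (forall v, height v <= k) -> k_colourable e k.
Proof.
move=> height_le.
have lt_k v : (height v).-1 < k by have := height_le v; have := height_gt0 v; lia.
exists (fun v => Ordinal (lt_k v)) => x y /height_proper neq_h /(congr1 val) /= eq_h.
by apply: neq_h; have := height_gt0 x; have := height_gt0 y; lia.
Qed.

End Colouring.
End Height.

Section ColourRank.
Variables (T : finType) (C : eqType) (beta : T -> C).

Definition colour_rank (x : T) : nat := index (beta x) (map beta (enum T)).

Lemma colour_rank_inj x y : colour_rank x = colour_rank y -> beta x = beta y.
Proof. by apply: (index_inj (beta x)); apply: map_f; rewrite mem_enum. Qed.

Lemma uniq_colours_of_sorted_rank p :
  sorted ltn (map colour_rank p) -> uniq (map beta p).
Proof.
move=> /(sorted_uniq ltn_trans ltnn).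
by rewrite (map_comp (index^~ _) beta) => /map_uniq.
Qed.

End ColourRank.

Section InducedPath.
Variables (T : finType) (e : rel T).
Hypothesis e_sym : symmetric e.

Lemma chord_cycle p x0 i j :
  uniq p -> sorted e p -> i.+1 < j -> j < size p ->
  e (nth x0 p i) (nth x0 p j) -> is_cycle e (take (j - i).+1 (drop i p)).
Proof.
move=> uniq_p sorted_p lt_ij lt_jp chord.
set q := take _ _.
have size_q : size q = (j - i).+1 by apply: size_takel; rewrite size_drop; lia.
have q_cons : q = nth x0 p i :: take (j - i) (drop i.+1 p).
  by rewrite /q (drop_nth x0) //; lia.
have q_last : nth x0 q (j - i) = nth x0 p j.
  by rewrite nth_take ?nth_drop; [congr nth; lia | lia].
split; first by rewrite size_q; lia.
split; first by rewrite take_uniq ?drop_uniq.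
have sorted_q : sorted e q by rewrite take_sorted ?drop_sorted.
move: q_last sorted_q size_q; rewrite q_cons /= rcons_path => q_last -> [size_l].
by rewrite (last_nth x0) size_l q_last e_sym.
Qed.

Lemma induced_path_of_girth p :
  girth_gt e (size p) -> uniq p -> sorted e p -> induced_path e p.
Proof.
move=> girth uniq_p sorted_p; split=> //; split=> // x0 i j lt_ij lt_jp.
apply/negP => /(chord_cycle uniq_p sorted_p lt_ij lt_jp) /girth.
rewrite size_takel ?size_drop; last exact: ltn_sub2r (ltn_trans (ltnW lt_ij) lt_jp) lt_jp.
by rewrite ltnS => /leq_trans/(_ (leq_subr i j)); rewrite leqNgt lt_jp.
Qed.

End InducedPath.

Theorem corollary1 (T : finType) (e : rel T) (C : eqType) (beta : T -> C) (chi : nat) :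
  simple_graph e ->
  chromatic_number e chi ->
  girth_gt e chi ->
  proper_colouring e beta ->
  exists p : seq T, [/\ induced_path e p, size p = chi & uniq (map beta p)].
Proof.
move=> [e_sym _] [_ chi_min] girth beta_proper.
have [->|chi_gt0] := posnP chi.
  by exists [::]; split => //; split => // x0 i [].
pose r := colour_rank beta.
pose d : rel T := fun x y => e x y && (r x < r y).
have d_rank u v : d u v -> r u < r v by case/andP.
have d_orients_e x y : e x y -> d x y || d y x.
  move=> exy; rewrite /d exy e_sym exy /= -neq_ltn.
  by apply/eqP => /colour_rank_inj; apply: beta_proper.
have [v chi_le_h] : exists v, chi <= height d r v.
  apply/existsP; apply: contraT => /existsPn h_lt.
  have /chi_min : k_colourable e chi.-1.
    by apply: (colourable_of_height_bound d_rank d_orients_e) => u; have := h_lt u; lia.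
  by rewrite leqNgt ltn_predL chi_gt0.
have [q sorted_q size_q] := path_of_height d r v.
pose p := drop (size q - chi) q.
have size_p : size p = chi by rewrite size_drop; lia.
have sorted_p : sorted d p by exact: drop_sorted.
have colours_p : uniq (map beta p).
  apply: uniq_colours_of_sorted_rank; rewrite sorted_map.
  by apply: sub_sorted sorted_p => x y /d_rank.
exists p; split => //.
apply: induced_path_of_girth; rewrite ?size_p //; first exact: map_uniq colours_p.
by apply: sub_sorted sorted_p => x y /andP[].
Qed.
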